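(* Let $F$, $H$, $X$, $\Omega$, $Q$ and the sequences generated by the IneIREG method be as described in the context. Let $\varepsilon>0$ be a tolerance and $\mathcal D_0>0$ satisfy $\mathcal D_0\ge \overline\lambda C_HD_X/\underline\lambda$, and suppose $\eta_k\equiv\eta:=\varepsilon/(2\mathcal D_0)$ for all $k\ge0$; $\alpha_0\in[0,1]$ and $(\alpha_k)$ is nonincreasing; $\lambda_k\in[\underline\lambda,\overline\lambda]$ for all $k$ with $0<\underline\lambda\le\overline\lambda\le1/(L_F+\eta L_H)$; and $\hat s:=\sum_{k=0}^\infty\delta_k<+\infty$. For $k\ge1$ let $\Lambda_k=\sum_{j=0}^{k-1}\lambda_j$ and $\overline y_k=\Lambda_k^{-1}\sum_{j=0}^{k-1}\lambda_jy_j$. Then for all $$k\ge\max\Big\{\Big\lceil\frac{1}{\varepsilon^2}\Big(\frac{\mathcal D_0(D_X^2+\hat s)}{\underline\lambda}\Big)\Big\rceil,\ \Big\lceil\frac1\varepsilon\Big(\frac{D_X^2+\hat s}{\underline\lambda}\Big)\Big\rceil\Big\}$$ we have $-B_H\,\mathrm{dist}(\overline y_k,Q)\le\mathrm{Gap}(\overline y_k,H,Q)\le\varepsilon$ and $0\le\mathrm{Gap}(\overline y_k,F,X)\le\varepsilon$. Moreover, if $Q$ is $\sigma$-weakly sharp of order $\mathcal M\ge1$, then for such $k$, $\mathrm{Gap}(\overline y_k,H,Q)\ge-\big(B_H/\sigma^{1/\mathcal M}\big)\varepsilon^{1/\mathcal M}$.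
   Context: Work in $\mathbb{R}^n$ with Euclidean inner product $\langle\cdot,\cdot\rangle$ and norm $\|\cdot\|$. The maps $F\colon \mathrm{Dom}\,F\to\mathbb{R}^n$ and $H\colon\mathrm{Dom}\,H\to\mathbb{R}^n$ are monotone and Lipschitz continuous with constants $L_F>0$ and $L_H>0$. $X$ is a nonempty compact convex set and $\Omega$ a nonempty closed convex set with $X\subset\Omega\subset\mathrm{Dom}\,F\cap\mathrm{Dom}\,H$; $P_X,P_\Omega$ denote orthogonal projections. $Q:=\{x\in X:\langle F(x),y-x\rangle\ge0\ \forall y\in X\}$ is assumed nonempty. $D_X:=\sup_{x,y\in X}\|x-y\|$, $C_H:=\sup_{x\in X}\|H(x)\|$, $B_H:=\sup_{x\in Q}\|H(x)\|$, $\mathrm{dist}(y,Q)$ is the Euclidean distance to $Q$. $\mathrm{Gap}(z,H,Q):=\sup_{x\in Q}\langle H(x),z-x\rangle$, $\mathrm{Gap}(z,F,X):=\sup_{x\in X}\langle F(x),z-x\rangle$. $Q$ is $\sigma$-weakly sharp of order $\mathcal M\ge1$ ($\sigma>0$) if $\langle F(x),y-x\rangle\ge\sigma\,\mathrm{dist}(y,Q)^{\mathcal M}$ for all $x\in Q$, $y\in X$. IneIREG method: start with $x_0=x_{-1}\in X$; for $k=0,1,\dots$, with parameters $\alpha_k\ge0$, $\lambda_k>0$, $\eta_k>0$, set $w_k=x_k+\alpha_k(x_k-x_{k-1})$, $w'_k=P_\Omega(w_k)$, $y_k=P_X\big(w_k-\lambda_k(F(w'_k)+\eta_kH(w'_k))\big)$,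 $x_{k+1}=P_X\big(w_k-\lambda_k(F(y_k)+\eta_kH(y_k))\big)$. Also $\delta_k:=\alpha_k(1+\alpha_k)\|x_k-x_{k-1}\|^2$ for $k\ge0$. *)

From HB Require Import structures.
From mathcomp Require Import all_boot all_order all_algebra.
From mathcomp Require Import all_classical all_reals all_analysis.
Set Implicit Arguments. Unset Strict Implicit. Unset Printing Implicit Defensive.
Import Order.TTheory GRing.Theory Num.Theory.
Import numFieldNormedType.Exports.
Local Open Scope classical_set_scope.
Local Open Scope ring_scope.

Section Defs.
Variables (R : realType) (n : nat).
Local Notation vec := 'rV[R]_n.

Definition inner_prod (u v : vec) : R := \sum_(i < n) u 0 i * v 0 i.
Definition enorm (u : vec) : R := Num.sqrt (inner_prod u u).

Definition is_proj (A : set vec) (P : vec -> vec) : Prop :=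
  forall z, A (P z) /\ forall a, A a -> enorm (z - P z) <= enorm (z - a).

Definition monotone_op (D : set vec) (F : vec -> vec) : Prop :=
  forall x y, D x -> D y -> 0 <= inner_prod (F x - F y) (x - y).

Definition lipschitz_op (D : set vec) (F : vec -> vec) (L : R) : Prop :=
  forall x y, D x -> D y -> enorm (F x - F y) <= L * enorm (x - y).

Definition VIsol (F : vec -> vec) (X : set vec) : set vec :=
  [set x | X x /\ forall y, X y -> 0 <= inner_prod (F x) (y - x)].

Definition diam_set (X : set vec) : R :=
  sup [set enorm (x - y) | x in X & y in X].

Definition sup_norm (H : vec -> vec) (A : set vec) : R :=
  sup [set enorm (H x) | x in A].

Definition dist_set (y : vec) (A : set vec) : R :=
  inf [set enorm (y - x) | x in A].

Definition gap_fn (z : vec) (H : vec -> vec) (A : set vec) : R :=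
  sup [set inner_prod (H x) (z - x) | x in A].

Definition weakly_sharp (F : vec -> vec) (X Q : set vec) (sigma M : R) : Prop :=
  forall x y, Q x -> X y -> sigma * (dist_set y Q `^ M) <= inner_prod (F x) (y - x).

End Defs.

From HB Require Import structures.
From mathcomp Require Import all_boot all_order all_algebra.
From mathcomp Require Import all_classical all_reals all_analysis.
From mathcomp Require Import ring lra.
Set Implicit Arguments. Unset Strict Implicit. Unset Printing Implicit Defensive.
Import Order.TTheory GRing.Theory Num.Theory.
Import numFieldNormedType.Exports.
Local Open Scope classical_set_scope.
Local Open Scope ring_scope.

(* With G := F + eta H, monotone and (L_F + eta L_H)-Lipschitz on Omega, the three
   projection inequalities of an IneIREG step and the Lipschitz bound on
   G(y_k) - G(P_Omega w_k) give the extragradient estimate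
     2 lambda_k <G(x), y_k - x> <= |w_k - x|^2 - |x_{k+1} - x|^2   for x in X.
   Expanding |w_k - x|^2 along the extrapolation makes these telescope up to the
   inertial errors delta_k (alpha_k is nonincreasing), so averaging gives
   <G(x), ybar_k - x> <= (D_X^2 + shat) / (2 Lambda_k), which the choice of k makes
   at most min(eps / 2, eta eps).  For x in X the eta H part costs at most
   eta C_H D_X <= eps / 2, bounding Gap(ybar_k, F, X); for x in Q the F part is
   nonnegative, bounding eta <H(x), ybar_k - x> and so Gap(ybar_k, H, Q).  The
   lower bounds come from Cauchy-Schwarz and, under weak sharpness, from
   sigma dist(ybar_k, Q)^M <= <F(q), ybar_k - q> <= eps. *)

Lemma quadratic_ge0_discr_le (R : realFieldType) (a b c : R) : 0 <= c ->
  (forall t, 0 <= a - 2 * b * t + c * t ^+ 2) -> b ^+ 2 <= a * c.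
Proof.
move=> c0 quad_ge0.
have [c_eq0|c_neq0] := eqVneq c 0.
  have [->|b_neq0] := eqVneq b 0; first by rewrite c_eq0; lra.
  have := quad_ge0 ((a + 1) / (2 * b)); rewrite c_eq0 mul0r addr0.
  have -> : 2 * b * ((a + 1) / (2 * b)) = a + 1 by field; rewrite b_neq0.
  lra.
have c_gt0 : 0 < c by rewrite lt_def c_neq0 c0.
have := quad_ge0 (b / c).
have -> : a - 2 * b * (b / c) + c * (b / c) ^+ 2 = (a * c - b ^+ 2) / c.
  by field; rewrite c_neq0.
by rewrite pmulr_lge0 ?invr_gt0 // subr_ge0.
Qed.

Lemma le0_of_linear_le_quadratic (R : realFieldType) (c K : R) : 0 <= K ->
  (forall t, 0 < t <= 1 -> 2 * c * t <= K * t ^+ 2) -> c <= 0.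
Proof.
move=> K0 ineq; rewrite leNgt; apply/negP => c0.
have Kc0 : 0 < K + c by lra.
set t := c / (K + c).
have t0 : 0 < t by rewrite divr_gt0.
have t1 : t <= 1 by rewrite ler_pdivrMr // mul1r lerDr.
have := ineq _ (introT andP (conj t0 t1)).
rewrite expr2 (mulrA K t t) ler_pM2r // => two_c_le.
have : K * t <= c by rewrite mulrA ler_pdivrMr //; nra.
lra.
Qed.

Section EuclideanSpace.
Context {R : realType} {n : nat}.
Implicit Types (u v w : 'rV[R]_n) (a : R).

Lemma inner_prodC u v : inner_prod u v = inner_prod v u.
Proof. by rewrite /inner_prod; apply: eq_bigr => i _; rewrite mulrC. Qed.

Lemma inner_prodDl u v w : inner_prod (u + v) w = inner_prod u w + inner_prod v w.
Proof. by rewrite /inner_prod -big_split; apply: eq_bigr => i _; rewrite mxE mulrDl. Qed.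

Lemma inner_prodDr w u v : inner_prod w (u + v) = inner_prod w u + inner_prod w v.
Proof. by rewrite inner_prodC inner_prodDl !(inner_prodC w). Qed.

Lemma inner_prodZl a u w : inner_prod (a *: u) w = a * inner_prod u w.
Proof. by rewrite /inner_prod mulr_sumr; apply: eq_bigr => i _; rewrite mxE mulrA. Qed.

Lemma inner_prodZr a w u : inner_prod w (a *: u) = a * inner_prod w u.
Proof. by rewrite inner_prodC inner_prodZl inner_prodC. Qed.

Lemma inner_prodNl u w : inner_prod (- u) w = - inner_prod u w.
Proof. by rewrite -scaleN1r inner_prodZl mulN1r. Qed.

Lemma inner_prodNr w u : inner_prod w (- u) = - inner_prod w u.
Proof. by rewrite inner_prodC inner_prodNl inner_prodC. Qed.

Lemma inner_prodBl u v w : inner_prod (u - v) w = inner_prod u w - inner_prod v w.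
Proof. by rewrite inner_prodDl inner_prodNl. Qed.

Lemma inner_prodBr w u v : inner_prod w (u - v) = inner_prod w u - inner_prod w v.
Proof. by rewrite inner_prodDr inner_prodNr. Qed.

Lemma inner_prod0r w : inner_prod w 0 = 0.
Proof. by rewrite -(scale0r 0) inner_prodZr mul0r. Qed.

Lemma inner_prod_sumr w k (f : nat -> 'rV[R]_n) :
  inner_prod w (\sum_(j < k) f j) = \sum_(j < k) inner_prod w (f j).
Proof. exact: (big_morph _ (inner_prodDr w) (inner_prod0r w)). Qed.

Lemma inner_prod_self_ge0 u : 0 <= inner_prod u u.
Proof. by apply: sumr_ge0 => i _; rewrite -expr2 sqr_ge0. Qed.

Lemma enorm_ge0 u : 0 <= enorm u.
Proof. exact: sqrtr_ge0. Qed.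

Lemma sqr_enorm u : enorm u ^+ 2 = inner_prod u u.
Proof. by rewrite sqr_sqrtr // inner_prod_self_ge0. Qed.

Lemma enormN u : enorm (- u) = enorm u.
Proof. by rewrite /enorm inner_prodNl inner_prodNr opprK. Qed.

Lemma enormBC u v : enorm (u - v) = enorm (v - u).
Proof. by rewrite -enormN opprB. Qed.

Lemma enormZ a u : enorm (a *: u) = `|a| * enorm u.
Proof.
by rewrite /enorm inner_prodZl inner_prodZr mulrA -expr2 sqrtrM ?sqr_ge0 // sqrtr_sqr.
Qed.

Lemma cauchy_schwarz u v : inner_prod u v <= enorm u * enorm v.
Proof.
have sqr_le : inner_prod u v ^+ 2 <= inner_prod u u * inner_prod v v.
  apply: quadratic_ge0_discr_le; first exact: inner_prod_self_ge0.
  move=> t; have := inner_prod_self_ge0 (u - t *: v).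
  by rewrite !(inner_prodBl, inner_prodBr, inner_prodZl, inner_prodZr) (inner_prodC v u) expr2; lra.
rewrite /enorm -sqrtrM ?inner_prod_self_ge0 //.
apply: le_trans (ler_norm _) _.
by rewrite -sqrtr_sqr ler_sqrt ?mulr_ge0 ?inner_prod_self_ge0.
Qed.

Lemma cauchy_schwarz_lower u v : - (enorm u * enorm v) <= inner_prod u v.
Proof. by rewrite lerNl -inner_prodNl -(enormN u) cauchy_schwarz. Qed.

Lemma enormD u v : enorm (u + v) <= enorm u + enorm v.
Proof.
rewrite -(ler_pXn2r (n := 2)) // ?nnegrE ?addr_ge0 ?enorm_ge0 //.
rewrite sqrrD !sqr_enorm !(inner_prodDl, inner_prodDr) (inner_prodC v u).
have := cauchy_schwarz u v; lra.
Qed.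

Lemma sqr_enormB u v :
  enorm (u - v) ^+ 2 = enorm u ^+ 2 + enorm v ^+ 2 - 2 * inner_prod u v.
Proof. by rewrite !sqr_enorm !(inner_prodBl, inner_prodBr) (inner_prodC v u); ring. Qed.

Lemma law_of_cosines u v w :
  enorm (u - w) ^+ 2 = enorm (u - v) ^+ 2 + enorm (w - v) ^+ 2 - 2 * inner_prod (u - v) (w - v).
Proof.
have -> : u - w = (u - v) - (w - v) by rewrite opprB addrA subrK.
exact: sqr_enormB.
Qed.

Lemma sqr_enorm_extrapolate a u v :
  enorm ((1 + a) *: u - a *: v) ^+ 2 =
  (1 + a) * enorm u ^+ 2 - a * enorm v ^+ 2 + a * (1 + a) * enorm (u - v) ^+ 2.
Proof.
by rewrite !sqr_enorm !(inner_prodBl, inner_prodBr, inner_prodZl, inner_prodZr) (inner_prodC v u); ring.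
Qed.

Lemma enorm_le_mx_norm u : enorm u <= n%:R * `|u|.
Proof.
have coord_le i : `|u 0 i| <= `|u|.
  have -> : `|u| = mx_norm u by [].
  by rewrite mx_normrE; apply/bigmax_geP; right; exists (0, i).
apply: (@le_trans _ _ (Num.sqrt ((n%:R * `|u|) ^+ 2))); last first.
  by rewrite sqrtr_sqr ger0_norm // mulr_ge0.
rewrite /enorm ler_sqrt ?sqr_ge0 //.
apply: (@le_trans _ _ (\sum_(i < n) `|u| ^+ 2)).
  apply: ler_sum => i _; rewrite -expr2 -real_normK ?num_real //.
  by rewrite lerXn2r ?nnegrE ?coord_le.
rewrite sumr_const card_ord -[_ *+ n]mulr_natl exprMn ler_wpM2r ?sqr_ge0 //.
case: n => [|m]; first by rewrite expr2 mul0r.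
by rewrite expr2 ler_peMl // ?ler1n.
Qed.

Lemma compact_enorm_bounded (X : set 'rV[R]_n) :
  compact X -> exists M, forall u, X u -> enorm u <= M.
Proof.
move=> /compact_bounded [M0 [_ M0_bound]].
exists (n%:R * (M0 + 1)) => u Xu.
apply: le_trans (enorm_le_mx_norm u) _.
by apply: ler_wpM2l => //; apply: (M0_bound (M0 + 1)); rewrite ?ltrDl.
Qed.

End EuclideanSpace.

Lemma le_sup_image (R : realType) T (A : set T) (f : T -> R) B :
  (forall x, A x -> f x <= B) -> forall x, A x -> f x <= sup [set f x | x in A].
Proof.
move=> f_le x Ax; apply: ub_le_sup; last by exists x.
by exists B => _ [y Ay <-]; apply: f_le.
Qed.

Lemma ge_sup_image (R : realType) T (A : set T) (f : T -> R) B :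
  A !=set0 -> (forall x, A x -> f x <= B) -> sup [set f x | x in A] <= B.
Proof.
move=> [x0 Ax0] f_le; apply: ge_sup; first by exists (f x0), x0.
by move=> _ [y Ay <-]; apply: f_le.
Qed.

Lemma le_inf_image (R : realType) T (A : set T) (f : T -> R) B :
  A !=set0 -> (forall x, A x -> B <= f x) -> B <= inf [set f x | x in A].
Proof.
move=> [x0 Ax0] f_ge; apply: lb_le_inf; first by exists (f x0), x0.
by move=> _ [y Ay <-]; apply: f_ge.
Qed.

Section SetsAndOperators.
Context {R : realType} {n : nat}.
Local Notation vec := 'rV[R]_n.
Implicit Types (A X Om Dom : set vec) (F G H : vec -> vec).

Lemma diam_set_ub X a b : compact X -> X a -> X b -> enorm (a - b) <= diam_set X.
Proof.
move=> /compact_enorm_bounded [M X_le] Xa Xb; apply: ub_le_sup; last first.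
  by exists a => //; exists b.
exists (M + M) => _ [a' Xa' [b' Xb' <-]].
by apply: le_trans (enormD _ _) _; rewrite enormN lerD ?X_le.
Qed.

Lemma enorm_le_sup_norm Dom X A H L v :
  compact X -> X `<=` Dom -> A `<=` X -> lipschitz_op Dom H L -> A v ->
  enorm (H v) <= sup_norm H A.
Proof.
move=> cX XDom AX lipH Av.
apply: (le_sup_image (f := fun u => enorm (H u)) (B := enorm (H v) + `|L| * diam_set X)) => // u Au.
have -> : H u = H v + (H u - H v) by rewrite addrC subrK.
apply: le_trans (enormD _ _) _; rewrite lerD2l.
apply: le_trans (lipH _ _ (XDom _ (AX _ Au)) (XDom _ (AX _ Av))) _.
apply: le_trans (ler_wpM2r (enorm_ge0 _) (ler_norm L)) _.
by apply: ler_wpM2l; [exact: normr_ge0 | exact: diam_set_ub cX (AX _ Au) (AX _ Av)].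
Qed.

Lemma diam_set_ge0 X : compact X -> X !=set0 -> 0 <= diam_set X.
Proof. by move=> cX [a Xa]; apply: le_trans (diam_set_ub cX Xa Xa); apply: enorm_ge0. Qed.

Lemma sup_norm_ge0 Dom X A H L :
  compact X -> X `<=` Dom -> A `<=` X -> lipschitz_op Dom H L -> A !=set0 ->
  0 <= sup_norm H A.
Proof.
move=> cX XDom AX lipH [v Av].
by apply: le_trans (enorm_le_sup_norm cX XDom AX lipH Av); apply: enorm_ge0.
Qed.

Lemma dist_set_ge0 z A : A !=set0 -> 0 <= dist_set z A.
Proof. by move=> A0; apply: le_inf_image => // v _; apply: enorm_ge0. Qed.

Lemma convex_set_comb X a b t :
  convex_set X -> X a -> X b -> 0 <= t -> t <= 1 -> X (t *: a + (1 - t) *: b).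
Proof.
move=> cvxX Xa Xb t0 t1.
by have := cvxX a b (Itv01 t0 t1) (mem_set Xa) (mem_set Xb); rewrite inE.
Qed.

Lemma is_proj_obtuse X P z a : convex_set X -> is_proj X P -> X a ->
  inner_prod (z - P z) (a - P z) <= 0.
Proof.
move=> cvxX projX Xa; have [XPz Pz_min] := projX z.
apply: (le0_of_linear_le_quadratic (sqr_ge0 (enorm (a - P z)))) => t /andP[t0 t1].
have := Pz_min _ (convex_set_comb cvxX Xa XPz (ltW t0) t1).
have -> : z - (t *: a + (1 - t) *: P z) = (z - P z) - t *: (a - P z).
  by apply/rowP => i; rewrite !mxE; ring.
rewrite -(ler_pXn2r (n := 2)) ?nnegrE ?enorm_ge0 //.
rewrite (sqr_enormB (z - P z)) enormZ ger0_norm; last exact: ltW.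
by rewrite inner_prodZr exprMn; lra.
Qed.

Lemma sum_weights_gt0 (lam : nat -> R) k :
  (forall j, 0 < lam j) -> (0 < k)%N -> 0 < \sum_(j < k) lam j.
Proof.
move=> lam_gt0; case: k => // k _.
by rewrite big_ord_recr /= ltr_wpDl ?sumr_ge0 // => j _; apply: ltW.
Qed.

Definition weighted_mean (lam : nat -> R) (v : nat -> vec) k : vec :=
  (\sum_(j < k) lam j)^-1 *: \sum_(j < k) lam j *: v j.

Lemma convex_set_weighted_mean X (lam : nat -> R) (v : nat -> vec) k :
  convex_set X -> (forall j, 0 < lam j) -> (forall j, X (v j)) -> (0 < k)%N ->
  X (weighted_mean lam v k).
Proof.
move=> cvxX lam_gt0 Xv; elim: k => [//|k IH] _; rewrite /weighted_mean !big_ord_recr /=.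
have [->|k_gt0] := posnP k.
  by rewrite !big_ord0 !add0r scalerA mulVf ?scale1r ?gt_eqF.
have {}IH := IH k_gt0; rewrite /weighted_mean in IH.
set L := \sum_(j < k) lam j in IH *; set S := \sum_(j < k) lam j *: v j in IH *.
have L0 : 0 < L := sum_weights_gt0 lam_gt0 k_gt0.
have Lk0 : 0 < L + lam k by rewrite addr_gt0.
have t0 : 0 <= lam k / (L + lam k) by rewrite divr_ge0 ?ltW.
have t1 : lam k / (L + lam k) <= 1 by rewrite ler_pdivrMr // mul1r lerDr ltW.
have := convex_set_comb cvxX (Xv k) IH t0 t1.
congr X; apply/rowP => i; rewrite !mxE.
by field; rewrite !gt_eqF.
Qed.

Lemma inner_prod_weighted_mean (g z : vec) (lam : nat -> R) (v : nat -> vec) k :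
  \sum_(j < k) lam j != 0 ->
  \sum_(j < k) lam j * inner_prod g (v j - z) =
  (\sum_(j < k) lam j) * inner_prod g (weighted_mean lam v k - z).
Proof.
move=> Lam_neq0.
rewrite inner_prodBr inner_prodZr (inner_prod_sumr _ _ (fun j => lam j *: v j)) mulrBr mulrA mulfV // mul1r.
under [in RHS]eq_bigr do rewrite inner_prodZr.
under [in LHS]eq_bigr do rewrite inner_prodBr mulrBr.
by rewrite sumrB mulr_suml.
Qed.

Lemma monotone_opS Dom Dom' F : Dom' `<=` Dom -> monotone_op Dom F -> monotone_op Dom' F.
Proof. by move=> sub monF u v Du Dv; apply: monF; apply: sub. Qed.

Lemma lipschitz_opS Dom Dom' F L :
  Dom' `<=` Dom -> lipschitz_op Dom F L -> lipschitz_op Dom' F L.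
Proof. by move=> sub lipF u v Du Dv; apply: lipF; apply: sub. Qed.

Lemma monotone_opD Dom F H e : 0 <= e ->
  monotone_op Dom F -> monotone_op Dom H -> monotone_op Dom (fun v => F v + e *: H v).
Proof.
move=> e0 monF monH u v Du Dv.
have -> : F u + e *: H u - (F v + e *: H v) = (F u - F v) + e *: (H u - H v).
  by rewrite scalerBr opprD addrACA.
by rewrite inner_prodDl inner_prodZl addr_ge0 ?mulr_ge0 ?monF ?monH.
Qed.

Lemma lipschitz_opD Dom F H LF LH e : 0 <= e ->
  lipschitz_op Dom F LF -> lipschitz_op Dom H LH ->
  lipschitz_op Dom (fun v => F v + e *: H v) (LF + e * LH).
Proof.
move=> e0 lipF lipH u v Du Dv.
have -> : F u + e *: H u - (F v + e *: H v) = (F u - F v) + e *: (H u - H v).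
  by rewrite scalerBr opprD addrACA.
apply: le_trans (enormD _ _) _; rewrite enormZ ger0_norm // mulrDl -mulrA.
by rewrite lerD ?ler_wpM2l ?lipF ?lipH.
Qed.

Lemma regularized_op_monotone_lipschitz Om DomF DomH F H LF LH e : 0 <= e ->
  Om `<=` DomF `&` DomH -> monotone_op DomF F -> monotone_op DomH H ->
  lipschitz_op DomF F LF -> lipschitz_op DomH H LH ->
  monotone_op Om (fun v => F v + e *: H v) /\
  lipschitz_op Om (fun v => F v + e *: H v) (LF + e * LH).
Proof.
move=> e0 OmDom monF monH lipF lipH.
have [OmF OmH] : Om `<=` DomF /\ Om `<=` DomH by split=> v /OmDom[].
split; first exact: monotone_opD e0 (monotone_opS OmF monF) (monotone_opS OmH monH).
exact: lipschitz_opD e0 (lipschitz_opS OmF lipF) (lipschitz_opS OmH lipH).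
Qed.

Lemma lipschitz_cross_term Dom G L (lam : R) a b c :
  lipschitz_op Dom G L -> Dom a -> Dom b -> 0 <= lam -> lam * L <= 1 ->
  2 * inner_prod (lam *: (G a - G b)) (a - c) <= enorm (a - b) ^+ 2 + enorm (a - c) ^+ 2.
Proof.
move=> lipG Da Db lam0 lamL; rewrite inner_prodZl.
have := enorm_ge0 (a - b); have := enorm_ge0 (a - c).
set e1 := enorm (a - b); set e2 := enorm (a - c) => e2_ge0 e1_ge0.
have cs : inner_prod (G a - G b) (a - c) <= L * e1 * e2.
  by apply: le_trans (cauchy_schwarz _ _) _; rewrite ler_wpM2r ?enorm_ge0 ?lipG.
have := ler_wpM2l lam0 cs.
have := ler_piMl (mulr_ge0 e1_ge0 e2_ge0) lamL.
have := sqr_ge0 (e1 - e2).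
lra.
Qed.

Lemma extragradient_step X Om PX PO (w x1 y z p p' : vec) :
  convex_set X -> convex_set Om -> X `<=` Om -> is_proj X PX -> is_proj Om PO -> X z ->
  y = PX (w - p') -> x1 = PX (w - p) ->
  2 * inner_prod (p - p') (y - x1) <= enorm (y - PO w) ^+ 2 + enorm (y - x1) ^+ 2 ->
  2 * inner_prod p (y - z) <= enorm (w - z) ^+ 2 - enorm (x1 - z) ^+ 2.
Proof.
move=> cvxX cvxOm XOm projX projOm Xz yE x1E.
have Xy : X y by rewrite yE; exact: (projX _).1.
have Xx1 : X x1 by rewrite x1E; exact: (projX _).1.
set w' := PO w; rewrite inner_prodBl => cross.
have obtuse_x1 : inner_prod (w - x1) (z - x1) <= inner_prod p (z - x1).
  have := is_proj_obtuse (w - p) cvxX projX Xz.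
  by rewrite -x1E addrAC [inner_prod (_ - p) _]inner_prodBl subr_le0.
have obtuse_y : inner_prod (w - y) (x1 - y) <= inner_prod p' (x1 - y).
  have := is_proj_obtuse (w - p') cvxX projX Xx1.
  by rewrite -yE addrAC [inner_prod (_ - p') _]inner_prodBl subr_le0.
have obtuse_w' : inner_prod (w - w') (y - w') <= 0 := is_proj_obtuse w cvxOm projOm (XOm _ Xy).
have split_p : inner_prod p (y - x1) = inner_prod p (y - z) + inner_prod p (z - x1).
  by rewrite -inner_prodDr addrA subrK.
have flip_p' : inner_prod p' (x1 - y) = - inner_prod p' (y - x1).
  by rewrite -inner_prodNr opprB.
have := law_of_cosines w x1 z; have := law_of_cosines w y x1.
have := law_of_cosines w w' y; have := sqr_ge0 (enorm (w - w')).
rewrite (enormBC z x1) (enormBC x1 y).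
lra.
Qed.

End SetsAndOperators.

Lemma inertial_telescope (R : realType) (a d al c : nat -> R) (Dsq s : R) :
  (forall j, 0 <= a j) -> (forall j, a j <= Dsq) -> al 0%N <= 1 ->
  (forall j, 0 <= al j) -> (forall j, al j.+1 <= al j) ->
  (forall j, c j <= (1 + al j) * a j - al j * a j.-1 + d j - a j.+1) ->
  (forall N, \sum_(j < N) d j <= s) ->
  forall k, \sum_(j < k) c j <= Dsq + s.
Proof.
move=> a_ge0 a_le al01 al_ge0 al_noninc c_le d_sum_le.
have potential k : \sum_(j < k) c j + a k - al k * a k.-1 <=
    (1 - al 0%N) * a 0%N + \sum_(j < k) d j + (al 0%N - al k) * Dsq.
  elim: k => [|k IH]; first by rewrite !big_ord0 /=; lra.
  rewrite !big_ord_recr /=.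
  have := c_le k; have := al_noninc k.
  have : (al k - al k.+1) * a k <= (al k - al k.+1) * Dsq.
    by rewrite ler_wpM2l // subr_ge0.
  lra.
move=> k; have := potential k; have := d_sum_le k; have := a_ge0 k.
have : (1 - al 0%N) * a 0%N <= (1 - al 0%N) * Dsq by rewrite ler_wpM2l // subr_ge0.
have : al k * a k.-1 <= al k * Dsq by rewrite ler_wpM2l.
lra.
Qed.

Lemma partial_sum_le_lim (R : realType) (d : nat -> R) s : (forall j, 0 <= d j) ->
  (fun N : nat => \sum_(0 <= j < N) d j) @ \oo --> s -> forall N, \sum_(j < N) d j <= s.
Proof.
move=> d_ge0 cvg_s N.
have nd : nondecreasing_seq (fun N : nat => \sum_(0 <= j < N) d j).
  by apply/nondecreasing_seqP => m; rewrite big_nat_recr //= lerDl.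
have := nondecreasing_cvgn_le nd (cvgP _ cvg_s) N.
by rewrite (cvg_lim _ cvg_s) // big_mkord.
Qed.

Section IneIREG.
Context {R : realType} {n : nat}.
Local Notation vec := 'rV[R]_n.
Variables (X Om : set vec) (PX PO G : vec -> vec) (L : R).
Hypotheses (cvxX : convex_set X) (cvxOm : convex_set Om) (XOm : X `<=` Om)
  (projX : is_proj X PX) (projOm : is_proj Om PO)
  (monG : monotone_op Om G) (lipG : lipschitz_op Om G L).
Variables (x y w : nat -> vec) (alpha lambda : nat -> R).
Hypotheses (Xx0 : X (x 0%N)) (lambda_gt0 : forall k, 0 < lambda k)
  (lambdaL : forall k, lambda k * L <= 1)
  (wE : forall k, w k = x k + alpha k *: (x k - x k.-1))
  (yE : forall k, y k = PX (w k - lambda k *: G (PO (w k))))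
  (xE : forall k, x k.+1 = PX (w k - lambda k *: G (y k))).

Lemma ineireg_x_mem k : X (x k).
Proof. by case: k => [//|k]; rewrite xE; exact: (projX _).1. Qed.

Lemma ineireg_y_mem k : X (y k).
Proof. by rewrite yE; exact: (projX _).1. Qed.

Lemma ineireg_step k z : X z ->
  2 * lambda k * inner_prod (G z) (y k - z) <=
  (1 + alpha k) * enorm (x k - z) ^+ 2 - alpha k * enorm (x k.-1 - z) ^+ 2
  + alpha k * (1 + alpha k) * enorm (x k - x k.-1) ^+ 2 - enorm (x k.+1 - z) ^+ 2.
Proof.
move=> Xz.
have Oy := XOm (ineireg_y_mem k).
have mon : inner_prod (G z) (y k - z) <= inner_prod (G (y k)) (y k - z).
  by have := monG Oy (XOm Xz); rewrite inner_prodBl subr_ge0.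
have cross : 2 * inner_prod (lambda k *: G (y k) - lambda k *: G (PO (w k))) (y k - x k.+1)
    <= enorm (y k - PO (w k)) ^+ 2 + enorm (y k - x k.+1) ^+ 2.
  rewrite -scalerBr; apply: lipschitz_cross_term lipG Oy (projOm _).1 _ (lambdaL k).
  exact: ltW.
have := extragradient_step cvxX cvxOm XOm projX projOm Xz (yE k) (xE k) cross.
have -> : w k - z = (1 + alpha k) *: (x k - z) - alpha k *: (x k.-1 - z).
  by rewrite wE; apply/rowP => i; rewrite !mxE; ring.
rewrite sqr_enorm_extrapolate inner_prodZl.
have -> : x k - z - (x k.-1 - z) = x k - x k.-1 by rewrite opprB addrA subrK.
have := ler_wpM2l (ltW (lambda_gt0 k)) mon.
lra.
Qed.

Hypotheses (alpha_ge0 : forall k, 0 <= alpha k) (alpha0_le1 : alpha 0%N <= 1)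
  (alpha_noninc : forall k, alpha k.+1 <= alpha k).

Lemma ineireg_averaged_bound s k z : compact X ->
  (fun N : nat => \sum_(0 <= j < N) alpha j * (1 + alpha j) * enorm (x j - x j.-1) ^+ 2)
    @ \oo --> s ->
  (0 < k)%N -> X z ->
  inner_prod (G z) (weighted_mean lambda y k - z) <=
  (diam_set X ^+ 2 + s) / (2 * \sum_(j < k) lambda j).
Proof.
move=> cX delta_cvg k_gt0 Xz.
have delta_ge0 j : 0 <= alpha j * (1 + alpha j) * enorm (x j - x j.-1) ^+ 2.
  by rewrite mulr_ge0 ?sqr_ge0 // mulr_ge0 ?addr_ge0.
have a_le j : enorm (x j - z) ^+ 2 <= diam_set X ^+ 2.
  have le_D := diam_set_ub cX (ineireg_x_mem j) Xz.
  by rewrite !expr2; apply: ler_pM; rewrite ?enorm_ge0.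
have := inertial_telescope (fun j => sqr_ge0 _) a_le alpha0_le1 alpha_ge0 alpha_noninc
  (fun j => ineireg_step j Xz) (partial_sum_le_lim delta_ge0 delta_cvg) k.
under eq_bigr do rewrite -mulrA.
have Lam_gt0 := sum_weights_gt0 lambda_gt0 k_gt0.
rewrite -mulr_sumr inner_prod_weighted_mean ?gt_eqF // ler_pdivlMr ?mulr_gt0 //.
lra.
Qed.

End IneIREG.

Section Gap.
Context {R : realType} {n : nat}.
Local Notation vec := 'rV[R]_n.
Implicit Types (A X : set vec) (F H : vec -> vec).

Lemma gap_fn_le z H A b : A !=set0 ->
  (forall v, A v -> inner_prod (H v) (z - v) <= b) -> gap_fn z H A <= b.
Proof. by move=> A0 ub; rewrite /gap_fn; apply: (ge_sup_image A0 ub). Qed.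

Lemma le_gap_fn z H A b v : (forall u, A u -> inner_prod (H u) (z - u) <= b) -> A v ->
  inner_prod (H v) (z - v) <= gap_fn z H A.
Proof. by move=> ub Av; rewrite /gap_fn; apply: (le_sup_image ub). Qed.

Lemma gap_fn_ge0 z H A b : (forall v, A v -> inner_prod (H v) (z - v) <= b) -> A z ->
  0 <= gap_fn z H A.
Proof. by move=> ub Az; have := le_gap_fn ub Az; rewrite subrr inner_prod0r. Qed.

Lemma gap_fn_ge_dist z H A b B : A !=set0 -> 0 <= B ->
  (forall v, A v -> enorm (H v) <= B) -> (forall v, A v -> inner_prod (H v) (z - v) <= b) ->
  - B * dist_set z A <= gap_fn z H A.
Proof.
move=> [v0 Av0] B0 H_le ub.
have gap_ge v : A v -> - B * enorm (z - v) <= gap_fn z H A.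
  move=> Av; apply: le_trans (le_gap_fn ub Av).
  have := cauchy_schwarz_lower (H v) (z - v).
  have := ler_wpM2r (enorm_ge0 (z - v)) (H_le v Av).
  lra.
have [B_eq0|B_neq0] := eqVneq B 0.
  by have := gap_ge v0 Av0; rewrite B_eq0 oppr0 !mul0r.
have B_gt0 : 0 < B by rewrite lt_def B_neq0 B0.
have : - gap_fn z H A / B <= dist_set z A.
  apply: le_inf_image; first by exists v0.
  by move=> v Av; rewrite ler_pdivrMr //; have := gap_ge v Av; lra.
rewrite ler_pdivrMr //; lra.
Qed.

Lemma powR_le_root (sigma M d e : R) : 0 < sigma -> 0 < M -> 0 <= d ->
  sigma * d `^ M <= e -> d <= e `^ (1 / M) / sigma `^ (1 / M).
Proof.
move=> sigma_gt0 M_gt0 d_ge0 le_e.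
have lhs_ge0 : 0 <= sigma * d `^ M by rewrite mulr_ge0 ?powR_ge0 ?ltW.
have := @ge0_ler_powR R (1 / M) (divr_ge0 ler01 (ltW M_gt0)) _ _ lhs_ge0 (le_trans lhs_ge0 le_e) le_e.
rewrite powRM ?powR_ge0 ?(ltW sigma_gt0) // -powRrM.
have -> : M * (1 / M) = 1 by field; rewrite gt_eqF.
by rewrite powRr1 // ler_pdivlMr ?powR_gt0 // mulrC.
Qed.

Lemma weakly_sharp_dist_le F X (Q : set vec) sigma M q z e :
  0 < sigma -> 1 <= M -> weakly_sharp F X Q sigma M -> Q q -> X z ->
  inner_prod (F q) (z - q) <= e -> dist_set z Q <= e `^ (1 / M) / sigma `^ (1 / M).
Proof.
move=> sigma_gt0 M_ge1 sharp Qq Xz le_e.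
apply: powR_le_root => //; first lra.
  by apply: dist_set_ge0; exists q.
exact: le_trans (sharp _ _ Qq Xz) le_e.
Qed.

Lemma inner_prod_le_regularized F H (e CH D : R) v z : 0 <= e ->
  enorm (H v) <= CH -> enorm (z - v) <= D ->
  inner_prod (F v) (z - v) <= inner_prod (F v + e *: H v) (z - v) + e * (CH * D).
Proof.
move=> e0 H_le zv_le; rewrite inner_prodDl inner_prodZl.
have H_ge : - (CH * D) <= inner_prod (H v) (z - v).
  apply: le_trans (cauchy_schwarz_lower _ _); rewrite lerN2.
  by rewrite ler_pM ?enorm_ge0.
have := ler_wpM2l e0 H_ge; lra.
Qed.

Lemma VIsol_regularized_ge F H X (e : R) q z : VIsol F X q -> X z ->
  e * inner_prod (H q) (z - q) <= inner_prod (F q + e *: H q) (z - q).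
Proof. by move=> [_ sol] Xz; rewrite inner_prodDl inner_prodZl lerDr sol. Qed.

Lemma regularized_gap_bounds F H Dom X z (L e eps beta : R) :
  compact X -> X !=set0 -> VIsol F X !=set0 -> X `<=` Dom -> lipschitz_op Dom H L ->
  X z -> 0 < e -> e * (sup_norm H X * diam_set X) <= eps / 2 ->
  beta <= eps / 2 -> beta <= e * eps ->
  (forall v, X v -> inner_prod (F v + e *: H v) (z - v) <= beta) ->
  let Q := VIsol F X in
  [/\ - sup_norm H Q * dist_set z Q <= gap_fn z H Q,
      gap_fn z H Q <= eps,
      0 <= gap_fn z F X,
      gap_fn z F X <= eps &
      forall sigma M : R, 0 < sigma -> 1 <= M -> weakly_sharp F X Q sigma M ->
        - (sup_norm H Q / sigma `^ (1 / M)) * eps `^ (1 / M) <= gap_fn z H Q].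
Proof.
move=> cX Xne Qne XDom lipH Xz e_gt0 cost_le beta_le_half beta_le_e reg_le Q.
have QX : Q `<=` X by move=> v [].
have F_le v : X v -> inner_prod (F v) (z - v) <= eps.
  move=> Xv; have := reg_le v Xv.
  have CH_le := enorm_le_sup_norm cX XDom (fun _ Xu => Xu) lipH Xv.
  have := inner_prod_le_regularized F (ltW e_gt0) CH_le (diam_set_ub cX Xz Xv).
  lra.
have H_le v : Q v -> inner_prod (H v) (z - v) <= eps.
  move=> Qv; rewrite -(ler_pM2l e_gt0).
  exact: le_trans (VIsol_regularized_ge H e Qv Xz) (le_trans (reg_le v (QX _ Qv)) beta_le_e).
have BH_ge0 := sup_norm_ge0 cX XDom QX lipH Qne.
have gapH_ge := gap_fn_ge_dist Qne BH_ge0 (fun v => enorm_le_sup_norm cX XDom QX lipH) H_le.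
split => //; [exact: gap_fn_le Qne H_le | exact: gap_fn_ge0 F_le Xz | exact: gap_fn_le Xne F_le |].
move=> sigma M sigma_gt0 M_ge1 sharp; have [q Qq] := Qne.
have := weakly_sharp_dist_le sigma_gt0 M_ge1 sharp Qq Xz (F_le q (QX _ Qq)).
move=> /(ler_wpM2l BH_ge0) dist_le; apply: le_trans gapH_ge; lra.
Qed.

End Gap.

Lemma regularization_cost_le (R : realFieldType) (eps D0 lam_lo lam_hi a b : R) :
  0 < eps -> 0 < D0 -> 0 < lam_lo -> lam_lo <= lam_hi -> 0 <= a -> 0 <= b ->
  lam_hi * a * b / lam_lo <= D0 -> eps / (2 * D0) * (a * b) <= eps / 2.
Proof.
move=> eps_gt0 D0_gt0 lam_lo_gt0 lam_lo_le a_ge0 b_ge0; rewrite ler_pdivrMr // => D0_ge.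
have ab_le : a * b <= D0.
  rewrite -(ler_pM2l lam_lo_gt0).
  by have := ler_wpM2r (mulr_ge0 a_ge0 b_ge0) lam_lo_le; lra.
have e_ge0 : 0 <= eps / (2 * D0) by rewrite divr_ge0 ?mulr_ge0 ?ltW.
have -> : eps / 2 = eps / (2 * D0) * D0 by field; rewrite gt_eqF.
by have := ler_wpM2l e_ge0 ab_le.
Qed.

Lemma iteration_count_bound (R : realType) (eps D0 lam_lo S : R) (lambda : nat -> R) k :
  0 < eps -> 0 < D0 -> 0 < lam_lo -> (0 < k)%N -> (forall j, lam_lo <= lambda j) ->
  Num.ceil (D0 * S / lam_lo / eps ^+ 2) <= k%:Z -> Num.ceil (S / lam_lo / eps) <= k%:Z ->
  S / (2 * \sum_(j < k) lambda j) <= eps / 2 /\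
  S / (2 * \sum_(j < k) lambda j) <= eps / (2 * D0) * eps.
Proof.
move=> eps_gt0 D0_gt0 lam_lo_gt0 k_gt0 lam_lo_le.
rewrite !ceil_le_int -!pmulrn => ceil_D0 ceil_1.
rewrite !ler_pdivrMr ?exprn_gt0 // in ceil_D0 ceil_1.
set Lam := \sum_(j < k) lambda j.
have Lam_gt0 : 0 < Lam.
  exact: sum_weights_gt0 (fun j => lt_le_trans lam_lo_gt0 (lam_lo_le j)) k_gt0.
have Lam_ge : k%:R * lam_lo <= Lam.
  have -> : k%:R * lam_lo = \sum_(j < k) lam_lo by rewrite sumr_const card_ord mulr_natl.
  exact: ler_sum.
have S_le : S <= eps * Lam by have := ler_wpM2l (ltW eps_gt0) Lam_ge; lra.
have D0S_le : D0 * S <= eps ^+ 2 * Lam.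
  by have := ler_wpM2l (ltW (exprn_gt0 2 eps_gt0)) Lam_ge; lra.
split; rewrite ler_pdivrMr ?mulr_gt0 //; first lra.
have -> : eps / (2 * D0) * eps * (2 * Lam) = eps ^+ 2 * Lam / D0 by field; rewrite gt_eqF.
by rewrite ler_pdivlMr // mulrC.
Qed.

Theorem theorem3p13 (R : realType) (n : nat)
  (F H : 'rV[R]_n -> 'rV[R]_n) (DomF DomH X Omega : set 'rV[R]_n)
  (LF LH : R) (PX POmega : 'rV[R]_n -> 'rV[R]_n)
  (x y w : nat -> 'rV[R]_n) (alpha lambda eta : nat -> R)
  (eps D0 lam_lo lam_hi shat : R) :
  (* monotone Lipschitz operators *)
  monotone_op DomF F -> monotone_op DomH H ->
  0 < LF -> 0 < LH -> lipschitz_op DomF F LF -> lipschitz_op DomH H LH ->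
  (* the sets *)
  X !=set0 -> compact X -> convex_set X ->
  Omega !=set0 -> closed Omega -> convex_set Omega ->
  X `<=` Omega -> Omega `<=` DomF `&` DomH ->
  is_proj X PX -> is_proj Omega POmega ->
  VIsol F X !=set0 ->
  (* IneIREG iterates, with x_{-1} = x_0 encoded as x (k.-1) *)
  X (x 0%N) ->
  (forall k, 0 <= alpha k) -> (forall k, 0 < lambda k) -> (forall k, 0 < eta k) ->
  (forall k, w k = x k + alpha k *: (x k - x k.-1)) ->
  (forall k, y k = PX (w k - lambda k *: (F (POmega (w k)) + eta k *: H (POmega (w k))))) ->
  (forall k, x k.+1 = PX (w k - lambda k *: (F (y k) + eta k *: H (y k)))) ->
  (* parameter choices *)
  0 < eps -> 0 < D0 ->
  lam_hi * sup_norm H X * diam_set X / lam_lo <= D0 ->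
  (forall k, eta k = eps / (2 * D0)) ->
  alpha 0%N <= 1 -> (forall k, alpha k.+1 <= alpha k) ->
  0 < lam_lo -> lam_lo <= lam_hi -> lam_hi <= 1 / (LF + eps / (2 * D0) * LH) ->
  (forall k, lam_lo <= lambda k <= lam_hi) ->
  (fun N : nat => \sum_(0 <= k < N)
       (alpha k * (1 + alpha k) * enorm (x k - x k.-1) ^+ 2)) @ \oo --> shat ->
  forall k : nat, (1 <= k)%N ->
  Num.ceil ((D0 * (diam_set X ^+ 2 + shat) / lam_lo) / eps ^+ 2) <= k%:Z ->
  Num.ceil (((diam_set X ^+ 2 + shat) / lam_lo) / eps) <= k%:Z ->
  let ybar := (\sum_(j < k) lambda j)^-1 *: \sum_(j < k) lambda j *: y j in
  let Q := VIsol F X in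
  [/\ - sup_norm H Q * dist_set ybar Q <= gap_fn ybar H Q,
      gap_fn ybar H Q <= eps,
      0 <= gap_fn ybar F X,
      gap_fn ybar F X <= eps &
      forall sigma M : R, 0 < sigma -> 1 <= M -> weakly_sharp F X Q sigma M ->
        - (sup_norm H Q / sigma `^ (1 / M)) * eps `^ (1 / M) <= gap_fn ybar H Q].
Proof.
move=> monF monH LF_gt0 LH_gt0 lipF lipH Xne cX cvxX _ _ cvxOm XOm OmDom projX projOm Qne
  Xx0 alpha_ge0 lambda_gt0 _ wE yE xE eps_gt0 D0_gt0 D0_ge etaE alpha0_le1 alpha_noninc
  lam_lo_gt0 lam_lo_le_hi lam_hi_le lambda_bnd delta_cvg k k_gt0 ceil_D0 ceil_1 ybar Q.
set et := eps / (2 * D0) in lam_hi_le *.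
have et_gt0 : 0 < et by rewrite divr_gt0 // mulr_gt0.
pose G v := F v + et *: H v.
have [monG lipG] := regularized_op_monotone_lipschitz (ltW et_gt0) OmDom monF monH lipF lipH.
have lambdaL j : lambda j * (LF + et * LH) <= 1.
  have L_gt0 : 0 < LF + et * LH := addr_gt0 LF_gt0 (mulr_gt0 et_gt0 LH_gt0).
  have := lam_hi_le; rewrite ler_pdivlMr // => lam_hi_L; apply: le_trans lam_hi_L.
  by case/andP: (lambda_bnd j) => _ le_hi; have := ler_wpM2r (ltW L_gt0) le_hi.
have yG j : y j = PX (w j - lambda j *: G (POmega (w j))) by rewrite yE etaE.
have xG j : x j.+1 = PX (w j - lambda j *: G (y j)) by rewrite xE etaE.
have avg v : X v -> inner_prod (F v + et *: H v) (ybar - v) <=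
    (diam_set X ^+ 2 + shat) / (2 * \sum_(j < k) lambda j).
  by move=> Xv; have := ineireg_averaged_bound cvxX cvxOm XOm projX projOm monG lipG Xx0
    lambda_gt0 lambdaL wE yG xG alpha_ge0 alpha0_le1 alpha_noninc cX delta_cvg k_gt0 Xv.
have [beta_le_half beta_le_eta] := iteration_count_bound eps_gt0 D0_gt0 lam_lo_gt0 k_gt0
  (fun j => proj1 (andP (lambda_bnd j))) ceil_D0 ceil_1.
have XDomH : X `<=` DomH by move=> v /XOm /OmDom[].
have cost_le : et * (sup_norm H X * diam_set X) <= eps / 2.
  apply: regularization_cost_le eps_gt0 D0_gt0 lam_lo_gt0 lam_lo_le_hi _ _ D0_ge.
    exact: sup_norm_ge0 cX XDomH (fun _ Xv => Xv) lipH Xne.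
  exact: diam_set_ge0 cX Xne.
have Xybar : X ybar := convex_set_weighted_mean cvxX lambda_gt0 (ineireg_y_mem projX yG) k_gt0.
exact: regularized_gap_bounds cX Xne Qne XDomH lipH Xybar et_gt0 cost_le
  beta_le_half beta_le_eta avg.
Qed.
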